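(* Let $\mathcal{A}$ be a parameter-preserving reduction algorithm (polynomial-time) for Max $k$-Weight SAT that preserves the set of variables, i.e. on input $(\Phi = (\mathcal{V}, \mathcal{C}), k)$ it produces $(\Phi' = (\mathcal{V}', \mathcal{C}'), k)$ with $\mathcal{V}' = \mathcal{V}$. Suppose there exist $\delta, h \ge 0$ and $s > 0$ (where $h, s$ may depend on $(\Phi, k)$) such that for every solution $Y \subseteq \mathcal{V}$ with $|Y| \le k$, $$|\mathrm{val}_{\Phi}(Y) - s \cdot \mathrm{val}_{\Phi'}(Y) - h| \le \delta \cdot \mathrm{OPT}_{\Phi, k}.$$ Then $(\mathcal{A}, \mathrm{Iden})$ is a $(1, 2\delta)$-APPA, where $\mathrm{Iden}$ is the solution-lifting algorithm that outputs its input solution unchanged.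
   Context: Max $k$-Weight SAT: input is a CNF formula $\Phi = (\mathcal{V}, \mathcal{C})$ with variable set $\mathcal{V}$ and a multiset $\mathcal{C}$ of clauses, plus a positive integer $k$. A solution is $Y \subseteq \mathcal{V}$ with $|Y| \le k$ (variables set to true); $\mathrm{val}_\Phi(Y)$ is the number of clauses (with multiplicity) satisfied by $Y$; $\mathrm{OPT}_{\Phi,k} = \max_{|Y|\le k}\mathrm{val}_\Phi(Y)$. A solution is $\beta$-approximate if its value is at least $\beta\cdot\mathrm{OPT}$. An $(\alpha,\gamma)$-APPA is a pair of polynomial-time algorithms $(\mathcal{A},\mathcal{B})$ where $\mathcal{A}$ maps an instance $(I,k)$ to an instance $(I',k')$ and $\mathcal{B}$ maps any $\beta$-approximate solution of $(I',k')$ to an $(\alpha\beta-\gamma)$-approximate solution of $(I,k)$. Parameter-preserving means $k'=k$. *)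

From mathcomp Require Import all_boot all_order all_algebra.
Set Implicit Arguments. Unset Strict Implicit. Unset Printing Implicit Defensive.
Import Order.TTheory GRing.Theory Num.Theory.

(* A literal over variables V: (x, true) is x, (x, false) is not x. *)
Definition literal (V : finType) := (V * bool)%type.
Definition clause (V : finType) := seq (literal V).
(* A CNF formula (V, C): the variable set is the finite type V,
   C is a multiset (sequence) of clauses. *)
Definition cnf (V : finType) := seq (clause V).

(* Y = set of variables assigned true. *)
Definition lit_sat (V : finType) (Y : {set V}) (l : literal V) : bool :=
  (l.1 \in Y) == l.2.
Definition clause_sat (V : finType) (Y : {set V}) (c : clause V) : bool :=
  has (lit_sat Y) c.

Definition cnf_val (V : finType) (Phi : cnf V) (Y : {set V}) : nat :=
  count (clause_sat Y) Phi.

Definition OPT (V : finType) (Phi : cnf V) (k : nat) : nat :=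
  \max_(Y : {set V} | #|Y| <= k) cnf_val Phi Y.

Definition approx_sol (R : realFieldType) (V : finType) (Phi : cnf V) (k : nat)
  (beta : R) (Y : {set V}) : Prop :=
  (#|Y| <= k)%N /\ ((cnf_val Phi Y)%:R >= beta * (OPT Phi k)%:R)%R.

(* Reductions that are parameter-preserving (k' = k) and variable-preserving
   (V' = V): they only transform the clause multiset. *)
Definition reduction := forall (V : finType), cnf V -> nat -> cnf V.
Definition lifting := forall (V : finType), cnf V -> nat -> {set V} -> {set V}.

Definition Iden : lifting := fun V Phi k Y => Y.

(* (alpha, gamma)-APPA (approximation guarantee part), approximation ratios
   beta ranging over [0,1]. *)
Definition is_APPA (R : realFieldType) (alpha gamma : R)
  (A : reduction) (B : lifting) : Prop :=
  forall (V : finType) (Phi : cnf V) (k : nat), (0 < k)%N ->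
  forall (beta : R) (Y : {set V}), (0 <= beta <= 1)%R ->
    approx_sol (A V Phi k) k beta Y ->
    approx_sol Phi k (alpha * beta - gamma)%R (B V Phi k Y).

(* Let Y* be optimal for Phi and write O, O' for the optima of Phi and of the
   reduced formula Phi'.  Closeness at Y* gives O <= s O' + h + delta O.  For a
   beta-approximate Y of Phi', closeness at Y gives
   val_Phi Y >= s beta O' + h - delta O >= beta (s O' + h) - delta O
            >= beta (1 - delta) O - delta O >= (beta - 2 delta) O,
   using beta <= 1 and h >= 0. *)
From mathcomp Require Import all_boot all_order all_algebra.
From mathcomp Require Import lra.
Set Implicit Arguments. Unset Strict Implicit. Unset Printing Implicit Defensive.
Import Order.TTheory GRing.Theory Num.Theory.
Local Open Scope ring_scope.

Lemma cnf_val_le_OPT (V : finType) (Phi : cnf V) (k : nat) (Y : {set V}) :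
  (#|Y| <= k)%N -> (cnf_val Phi Y <= OPT Phi k)%N.
Proof. by move=> Yk; apply: leq_bigmax_cond. Qed.

Lemma OPT_attained (V : finType) (Phi : cnf V) (k : nat) :
  exists2 Y : {set V}, (#|Y| <= k)%N & OPT Phi k = cnf_val Phi Y.
Proof.
have feasible : (0 < #|[pred Y : {set V} | #|Y| <= k]|)%N.
  by apply/card_gt0P; exists set0; rewrite inE cards0.
by have [Y] := eq_bigmax_cond (cnf_val Phi) feasible; rewrite inE; exists Y.
Qed.

Section ApproxTransfer.

Variables (R : realFieldType) (V : finType) (Phi Phi' : cnf V) (k : nat).
Variables (h s delta : R).
Hypotheses (h_ge0 : 0 <= h) (s_ge0 : 0 <= s).
Hypothesis close : forall Y : {set V}, (#|Y| <= k)%N ->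
  `|(cnf_val Phi Y)%:R - s * (cnf_val Phi' Y)%:R - h|
    <= delta * (OPT Phi k)%:R.

Let O : R := (OPT Phi k)%:R.
Let O' : R := (OPT Phi' k)%:R.

Lemma delta_OPT_ge0 : 0 <= delta * O.
Proof.
have set0_feasible : (#|@set0 V| <= k)%N by rewrite cards0.
by have := close set0_feasible; apply: le_trans.
Qed.

Lemma OPT_le_scaled_OPT : O <= s * O' + h + delta * O.
Proof.
have [Ys Ysk OPT_Ys] := OPT_attained Phi k.
have /ler_normlP[_ upper] := close Ysk.
have val'_le : (cnf_val Phi' Ys)%:R <= O' :> R by rewrite ler_nat cnf_val_le_OPT.
have := ler_wpM2l s_ge0 val'_le; move: upper; rewrite -OPT_Ys /O /O'; lra.
Qed.

Lemma approx_sol_transfer (beta : R) (Y : {set V}) :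
  0 <= beta <= 1 -> approx_sol Phi' k beta Y ->
  approx_sol Phi k (beta - 2 * delta) Y.
Proof.
move=> /andP[beta_ge0 beta_le1] [Yk apx]; split=> //.
have /ler_normlP[lower _] := close Yk.
have scaled_apx := ler_wpM2l s_ge0 apx.
have scaled_OPT := ler_wpM2l beta_ge0 OPT_le_scaled_OPT.
have beta_h : beta * h <= h by rewrite ler_piMl.
have beta_dO : beta * (delta * O) <= delta * O by rewrite ler_piMl ?delta_OPT_ge0.
rewrite -/O; nra.
Qed.

End ApproxTransfer.

Theorem lemma2p3 (R : realFieldType) (A : reduction) (delta : R) :
  0 <= delta ->
  (forall (V : finType) (Phi : cnf V) (k : nat), (0 < k)%N ->
     exists h s : R, 0 <= h /\ 0 < s /\
       forall Y : {set V}, (#|Y| <= k)%N ->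
         `|(cnf_val Phi Y)%:R - s * (cnf_val (A V Phi k) Y)%:R - h|
           <= delta * (OPT Phi k)%:R) ->
  is_APPA 1 (2 * delta) A Iden.
Proof.
move=> _ close V Phi k k_gt0 beta Y beta01 apx.
have [h [s [h_ge0 [s_gt0 closeY]]]] := close V Phi k k_gt0.
by rewrite mul1r; apply: (approx_sol_transfer h_ge0 (ltW s_gt0) closeY).
Qed.
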